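(* Let $m,p,k$ be positive integers, let $W \in \mathbb{R}^{m\times p}$, $\vec{x}\in\mathbb{R}^p$, let $\Theta$ be a real matrix with $k$ columns, let $f_m$ be a fixed function defined on $\{-1,+1\}^m$ with values in real vectors of length equal to the number of rows of $\Theta$, let $y$ be a target value, and let $\ell$ be a real-valued loss function such that $\ell(\Theta^{\top} f_m(\vec{g}), y)\in\mathbb{R}$ is defined for every $\vec{g}\in\{-1,+1\}^m$. Then for all real numbers $a > b > 0$, \[ \max_{\vec{g} \in \{-1,+1\}^m}\Big(a\,\vec{g}^{\top}W\vec{x} + \ell(\Theta^{\top} f_m(\vec{g}), y)\Big) - \max_{\vec{h} \in \{-1,+1\}^m} \big( a\,\vec{h}^{\top}W\vec{x} \big) \;\le\; \max_{\vec{g} \in \{-1,+1\}^m}\Big( b\,\vec{g}^{\top}W\vec{x} + \ell(\Theta^{\top} f_m(\vec{g}), y)\Big) - \max_{\vec{h} \in \{-1,+1\}^m} \big( b\,\vec{h}^{\top}W\vec{x} \big). \]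
   Context: This arises in learning oblique decision trees: the $m$ rows of $W$ are the split hyperplanes of the $m$ internal nodes of a binary tree, $\operatorname{sign}(W\vec{x})=\arg\max_{\vec{h}\in\{-1,+1\}^m}\vec{h}^\top W\vec{x}$ gives the split decisions, $f_m(\vec{g})$ is the indicator vector of the leaf reached given the binary split decisions $\vec{g}$, $\Theta$ contains the leaf parameters (one row per leaf), and $\ell$ is the loss of the prediction $\Theta^\top f_m(\vec{g})$ against target $y$. The right-hand-side quantity with scale $1$ is an upper bound on $\ell(\Theta^\top f_m(\operatorname{sign}(W\vec{x})),y)$; the proposition says this bound becomes tighter (smaller) as $W$ is scaled up. *)

From HB Require Import structures.
From mathcomp Require Import all_boot all_order all_algebra.
From mathcomp Require Import reals.
Set Implicit Arguments. Unset Strict Implicit. Unset Printing Implicit Defensive.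
Import Order.TTheory GRing.Theory Num.Theory.
Local Open Scope ring_scope.

(* The finite set {-1,+1}^m, encoded by the finite type of boolean
   functions on 'I_m (true ↦ +1, false ↦ -1). *)
Definition signs (m : nat) := {ffun 'I_m -> bool}.

Definition signvec (R : ringType) (m : nat) (g : signs m) : 'cV[R]_m :=
  \col_i (if g i then 1 else -1).

(* Maximum of a real-valued function over the (nonempty) finite set
   {-1,+1}^m.  The seed F [ffun=> true] is itself one of the values,
   so this is exactly the maximum. *)
Definition max_signs (R : realDomainType) (m : nat) (F : signs m -> R) : R :=
  \big[Num.max/F [ffun=> true]]_(g : signs m) F g.

Definition bilin (R : ringType) (m p : nat) (g : signs m)
    (W : 'M[R]_(m, p)) (x : 'cV[R]_p) : R :=
  ((signvec R g)^T *m W *m x) 0 0.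

From HB Require Import structures.
From mathcomp Require Import all_boot all_order all_algebra.
From mathcomp Require Import reals.
From mathcomp Require Import lra.
Import Order.TTheory GRing.Theory Num.Theory.
Local Open Scope ring_scope.

(* Let g_a maximise a u + L and h_b maximise b u.  Comparing with the
   competitors h_b and g_a in the other two maxima reduces the claim to
   (a - b) (u g_a - u h_b) <= 0, and u g_a <= u h_b by maximality of h_b. *)

Lemma max_signs_ub {R : realDomainType} {m} (F : signs m -> R) g :
  F g <= max_signs F.
Proof.
rewrite /max_signs; elim: (index_enum _) (mem_index_enum g) => [//|i r IH].
rewrite inE big_cons le_max => /orP[/eqP<-|/IH->]; by rewrite ?lexx ?orbT.
Qed.

Lemma max_signs_attained {R : realDomainType} {m} (F : signs m -> R) :
  exists g, max_signs F = F g.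
Proof.
apply: (big_ind (fun v => exists g, v = F g)) => [|v w [g ->] [h ->]|g _].
- by exists [ffun=> true].
- by rewrite /Num.max; case: ifP => _; [exists h | exists g].
- by exists g.
Qed.

Lemma max_signs_scaled_gap_antitone {R : realDomainType} {m}
    (u L : signs m -> R) (a b : R) :
  0 < b -> b <= a ->
  max_signs (fun g => a * u g + L g) - max_signs (fun h => a * u h)
  <= max_signs (fun g => b * u g + L g) - max_signs (fun h => b * u h).
Proof.
move=> b_gt0 le_ba.
have [ga ->] := max_signs_attained (fun g => a * u g + L g).
have [hb max_b] := max_signs_attained (fun h => b * u h).
have le_u : u ga <= u hb.
  by rewrite -(ler_pM2l b_gt0) -max_b (max_signs_ub (fun h => b * u h)).
rewrite max_b.
have le_a_hb := max_signs_ub (fun h => a * u h) hb.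
have le_b_ga := max_signs_ub (fun g => b * u g + L g) ga.
have : (a - b) * (u ga - u hb) <= 0 by rewrite mulr_ge0_le0 ?subr_ge0 ?subr_le0.
move: le_a_hb le_b_ga => /=; lra.
Qed.

Theorem proposition1 (R : realType) (m p k n : nat) (Y : Type)
    (hm : (0 < m)%N) (hp : (0 < p)%N) (hk : (0 < k)%N)
    (W : 'M[R]_(m, p)) (x : 'cV[R]_p) (Theta : 'M[R]_(n, k))
    (f : signs m -> 'cV[R]_n) (y : Y) (loss : 'cV[R]_k -> Y -> R)
    (a b : R) (hb : 0 < b) (hab : b < a) :
  max_signs (fun g => a * bilin g W x + loss (Theta^T *m f g) y)
    - max_signs (fun h => a * bilin h W x)
  <= max_signs (fun g => b * bilin g W x + loss (Theta^T *m f g) y)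
    - max_signs (fun h => b * bilin h W x).
Proof.
exact: max_signs_scaled_gap_antitone (fun g => bilin g W x)
  (fun g => loss (Theta^T *m f g) y) _ _ hb (ltW hab).
Qed.
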